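(* Let $A$ be a finitely generated $K$-algebra with a filtration $\mathcal{F}=\{V_n\}_{n\ge0}$. Fix an integer $k\ge1$ and let $\mathcal{G}=\{W_n\}_{n\ge0}$ be the filtration $W_n:=V_{nk}$. Then $\mathrm{h}_{\mathrm{alg}}(A,\mathcal{G})=k\cdot\mathrm{h}_{\mathrm{alg}}(A,\mathcal{F})$.
   Context: A filtration of a $K$-algebra $A$ is a family $\{V_n\}_{n\ge0}$ of subspaces with $0=V_0\subseteq V_1\subseteq\cdots$, $A=\bigcup_nV_n$ and $V_nV_m\subseteq V_{n+m}$; the quotients $V_n/V_{n-1}$ are assumed finite-dimensional. The algebraic entropy is $\mathrm{h}_{\mathrm{alg}}(A,\mathcal{F})=0$ if $A$ is finite-dimensional and otherwise $\limsup_{n\to\infty}\frac{\log\dim(V_n/V_{n-1})}{n}$ (with $\log0=-\infty$). *)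

From mathcomp Require Import all_boot all_order all_algebra.
From mathcomp Require Import all_classical all_reals all_analysis.
Set Implicit Arguments. Unset Strict Implicit. Unset Printing Implicit Defensive.
Import Order.TTheory GRing.Theory Num.Theory.
Local Open Scope classical_set_scope.
Local Open Scope ring_scope.

Section Filtrations.
Variables (K : fieldType) (A : algType K).

Definition is_subspace (S : set A) : Prop :=
  S 0 /\ (forall x y, S x -> S y -> S (x + y)) /\ (forall (c : K) x, S x -> S (c *: x)).

Definition fin_dim : Prop :=
  exists (d : nat) (b : 'I_d -> A), forall x : A,
    exists c : 'I_d -> K, x = \sum_(i < d) c i *: b i.

Definition fin_gen : Prop :=
  exists (s : seq A), forall S : set A,
    S 1 -> (forall x y, S x -> S y -> S (x + y)) ->
    (forall (c : K) x, S x -> S (c *: x)) ->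
    (forall x y, S x -> S y -> S (x * y)) ->
    (forall x, x \in s -> S x) -> S = setT.

(* b_0,...,b_{d-1} in V induce a basis of the quotient space V/W (W <= V). *)
Definition quot_basis (V W : set A) (d : nat) (b : 'I_d -> A) : Prop :=
  (forall i, V (b i)) /\
  (forall x, V x -> exists (c : 'I_d -> K) (w : A), W w /\ x = \sum_(i < d) c i *: b i + w) /\
  (forall c : 'I_d -> K, W (\sum_(i < d) c i *: b i) -> forall i, c i = 0).

Definition fin_quot (V W : set A) : Prop := exists d b, @quot_basis V W d b.

(* dim_K (V/W): the size of a basis of V/W (0 by convention if infinite) *)
Definition qdim (V W : set A) : nat := xget 0%N [set d | exists b, @quot_basis V W d b].

(* A filtration {V_n}_{n>=0} of A. The condition V_n V_m <= V_(n+m) is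
   written elementwise (equivalent since V_(n+m) is a subspace). *)
Definition filtration (V : nat -> set A) : Prop :=
  V 0%N = [set 0] /\
  (forall n, is_subspace (V n)) /\
  (forall n, V n `<=` V n.+1) /\
  (forall x, exists n, V n x) /\
  (forall n m x y, V n x -> V m y -> V (n + m)%N (x * y)) /\
  (forall n, (0 < n)%N -> fin_quot (V n) (V n.-1)).

(* algebraic entropy; log = natural logarithm, log 0 = -oo *)
Definition halg_term (R : realType) (V : nat -> set A) (n : nat) : \bar R :=
  let d := qdim (V n) (V n.-1) in
  if d == 0%N then -oo%E else ((ln (d%:R : R)) / n%:R)%:E.

Definition halg (R : realType) (V : nat -> set A) : \bar R :=
  if `[< fin_dim >] then 0%E else limn_esup (halg_term R V).

End Filtrations.

(* Put a_l := dim V_(l+1)/V_l.  Additivity of dimension along the chain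
   V_((n-1)k) <= ... <= V_(nk) shows that dim W_n/W_(n-1) is the block sum
   a_((n-1)k) + ... + a_(nk-1), which lies between its largest term a_j and
   k a_j, where nk - k <= j < nk.  Since (ln k)/n -> 0 and j/(nk) -> 1, the
   limsup of (ln of the block sum)/n is k times the limsup of (ln a_m)/m. *)

From mathcomp Require Import all_boot all_order all_algebra.
From mathcomp Require Import all_classical all_reals all_analysis.
From mathcomp Require Import lra zify.
Set Implicit Arguments. Unset Strict Implicit. Unset Printing Implicit Defensive.
Import Order.TTheory GRing.Theory Num.Theory.
Local Open Scope classical_set_scope.
Local Open Scope ring_scope.

Lemma sum_nat_leq_mul_max (a : nat -> nat) (p k : nat) : (0 < k)%N ->
  exists2 j, (p <= j < p + k)%N & (\sum_(p <= i < p + k) a i <= k * a j)%N.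
Proof.
move=> k0; have -> : (\sum_(p <= i < p + k) a i = \sum_(i < k) a (i + p))%N.
  by rewrite -{1}(add0n p) big_addn addKn big_mkord.
have [|i0 max_i0] := @bigop.eq_bigmax _ (fun i : 'I_k => a (i + p)%N).
  by rewrite card_ord.
exists (i0 + p)%N; first by rewrite leq_addl addnC ltn_add2l ltn_ord.
apply: (@leq_trans (\sum_(i < k) a (i0 + p))%N); last by rewrite sum_nat_const card_ord.
by apply: leq_sum => i _; rewrite -max_i0 bigop.leq_bigmax.
Qed.

Lemma leq_sum_nat_term (F : nat -> nat) (p q l : nat) : (p <= l < q)%N ->
  (F l <= \sum_(p <= i < q) F i)%N.
Proof.
by move=> lpq; rewrite (bigD1_seq l) ?mem_index_iota ?iota_uniq //= leq_addr.
Qed.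

Definition frequently (P : nat -> Prop) := forall N, exists2 n, (N <= n)%N & P n.

Section LimnEsup.
Variable R : realType.
Implicit Types (u v : nat -> \bar R) (t : R).

Lemma lte_fin_between (x y : \bar R) : (x < y)%E -> exists r : R, (x < r%:E < y)%E.
Proof.
case: x => [r| |]; case: y => [s| |] //= xy.
- by exists ((r + s) / 2); rewrite !lte_fin; move: xy; rewrite lte_fin; lra.
- by exists (r + 1); rewrite lte_fin ltry; lra.
- by exists (s - 1); rewrite lte_fin ltNyr; lra.
- by exists 0; rewrite ltNyr ltry.
Qed.

Lemma limn_esup_gtP u t :
  (t%:E < limn_esup u)%E <-> exists2 t', t < t' & frequently (fun n => (t'%:E < u n)%E).
Proof.
have limE : limn_esup u = ereal_inf (range (esups u)).
  by rewrite limn_esup_lim; apply: cvg_lim => //; exact: cvg_esups_inf.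
rewrite limE; split.
- move=> /lte_fin_between[t' /andP[tt' t'L]]; exists t'; first by rewrite -lte_fin.
  move=> N; have : (t'%:E < esups u N)%E.
    by apply: lt_le_trans t'L _; apply: ereal_inf_lbound; exists N.
  by move=> /ereal_sup_gt[_ [n /= Nn <-] t'u]; exists n.
- move=> [t' tt' often_t'].
  apply: (@lt_le_trans _ _ t'%:E); first by rewrite lte_fin.
  apply: le_ereal_inf_tmp => _ [N _ <-].
  have [n Nn t'u] := often_t' N.
  by apply: le_trans (ltW t'u) _; apply: ereal_sup_ubound; exists n.
Qed.

Lemma limn_esup_le_frequently (c : R) u v : 0 < c ->
  (forall t t', t < t' -> frequently (fun n => (t'%:E < u n)%E) ->
     frequently (fun n => ((c * t)%:E < v n)%E)) ->
  (c%:E * limn_esup u <= limn_esup v)%E.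
Proof.
move=> c0 transfer; rewrite leNgt; apply/negP.
move=> /lte_fin_between[r /andP[vr ru]].
have /limn_esup_gtP[t' rt' often_t'] : ((r / c)%:E < limn_esup u)%E.
  by rewrite mulrC EFinM lte_pdivrMl.
have often_v := transfer ((r / c + t') / 2) t' ltac:(lra) often_t'.
have : (r%:E < limn_esup v)%E.
  apply/limn_esup_gtP; exists (c * ((r / c + t') / 2)) => //.
  by rewrite -ltr_pdivrMl //; lra.
by rewrite ltNge (ltW vr).
Qed.
End LimnEsup.

Section BlockSums.
Variable R : realType.

Definition log_rate (d n : nat) : \bar R :=
  if d == 0%N then -oo%E else (ln (d%:R : R) / n%:R)%:E.

Lemma lt_log_rateP (d n : nat) (t : R) :
  (t%:E < log_rate d n)%E <-> (0 < d)%N /\ t < ln (d%:R : R) / n%:R.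
Proof.
rewrite /log_rate lt0n; case: eqP => _ /=; first by split => [|[]].
by rewrite lte_fin; split => [|[]].
Qed.

Lemma exists_nat_mul_gt (c e : R) : 0 < e ->
  exists M, forall n, (M <= n)%N -> c < n%:R * e.
Proof.
move=> e0; exists (Num.truncn (c / e)).+1 => n Mn.
rewrite -ltr_pdivrMr //; apply: lt_le_trans (truncnS_gt _) _.
by rewrite ler_nat.
Qed.

Variables (a : nat -> nat) (k : nat).
Hypothesis k_gt0 : (0 < k)%N.

Local Notation block_sum n := (\sum_(n.-1 * k <= l < n * k) a l.+1)%N.

Lemma frequently_block_sum_term (t t' : R) : t < t' ->
  frequently (fun n => (t'%:E < log_rate (block_sum n) n)%E) ->
  frequently (fun m => ((k%:R^-1 * t)%:E < log_rate (a m) m)%E).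
Proof.
move=> tt' often_block N.
have [|M lnk_small] := @exists_nat_mul_gt (ln (k%:R : R)) (t' - t); first by rewrite subr_gt0.
have [n] := often_block (maxn N M); rewrite geq_max => /andP[Nn Mn].
move=> /lt_log_rateP[D_gt0 lnD].
have n_gt0 : (0 < n)%N by case: n {Nn Mn lnD} D_gt0 => //; rewrite big_geq.
have blockE : (n * k = n.-1 * k + k)%N by rewrite -{1}(prednK n_gt0) mulSn addnC.
move: D_gt0 lnD; rewrite blockE => D_gt0 lnD.
have [j /andP[jl ju] Dj] := sum_nat_leq_mul_max (fun l => a l.+1) (n.-1 * k) k_gt0.
have aj_gt0 : (0 < a j.+1)%N by move: (leq_trans D_gt0 Dj); rewrite muln_gt0 => /andP[].
exists j.+1; first by nia.
apply/lt_log_rateP; split => //.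
set D := (\sum_(_ <= _ < _) _)%N in D_gt0 lnD Dj.
have lnD_le : ln (D%:R : R) <= ln (k%:R : R) + ln ((a j.+1)%:R : R).
  by rewrite -lnM ?posrE ?ltr0n // -natrM ler_ln ?posrE ?ltr0n ?ler_nat // muln_gt0 k_gt0.
have lnD_gt : t' * n%:R < ln (D%:R : R) by rewrite -ltr_pdivlMr // ltr0n.
have lnk_lt : ln (k%:R : R) < n%:R * (t' - t) by apply: lnk_small.
have j_le : (j.+1)%:R <= n%:R * k%:R :> R by rewrite -natrM ler_nat blockE.
have lna_ge0 : 0 <= ln ((a j.+1)%:R : R) by rewrite ln_ge0 // ler1n.
have k_pos : 0 < k%:R :> R by rewrite ltr0n.
rewrite mulrC ltr_pdivlMr ?ltr0n // mulrAC ltr_pdivrMr //.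
have [t_lt0|t_ge0] := ltP t 0; last by nra.
by apply: lt_le_trans (mulr_ge0 lna_ge0 (ltW k_pos)); rewrite pmulr_llt0 ?ltr0n.
Qed.

Lemma frequently_term_block_sum (s s' : R) : s < s' ->
  frequently (fun m => (s'%:E < log_rate (a m) m)%E) ->
  frequently (fun n => ((k%:R * s)%:E < log_rate (block_sum n) n)%E).
Proof.
move=> ss' often_term N.
have [|M ratio_close] := @exists_nat_mul_gt (s * (k%:R - 1)) (s' - s).
  by rewrite subr_gt0.
have [m] := often_term (maxn (N * k).+1 M); rewrite geq_max => /andP[Nm Mm].
move=> /lt_log_rateP[am_gt0 lnam].
have m_gt0 : (0 < m)%N by apply: leq_trans Nm.
pose n := (m.-1 %/ k).+1.
have m_in_block : (n.-1 * k <= m.-1 < n * k)%N by rewrite leq_trunc_div ltn_ceil.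
have aD : (a m <= block_sum n)%N.
  by rewrite -{1}(prednK m_gt0); exact: (leq_sum_nat_term (fun l => a l.+1)).
exists n; first by rewrite ltnW // ltnS leq_divRL // -ltnS prednK.
apply/lt_log_rateP; split; first exact: leq_trans aD.
have lna_le : ln ((a m)%:R : R) <= ln ((block_sum n)%:R : R).
  by rewrite ler_ln ?posrE ?ltr0n ?ler_nat //; exact: leq_trans aD.
have lna_gt : s' * m%:R < ln ((a m)%:R : R) by rewrite -ltr_pdivlMr // ltr0n.
have lna_ge0 : 0 <= ln ((a m)%:R : R) by rewrite ln_ge0 // ler1n.
have m_large : s * (k%:R - 1) < m%:R * (s' - s) by apply: ratio_close.
have nk_le : n%:R * k%:R + 1 <= m%:R + k%:R :> R.
  rewrite -natrM -natrD natr1 ler_nat; move: m_in_block => /andP[+ _] /=; lia.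
have k_pos : 0 < k%:R :> R by rewrite ltr0n.
rewrite ltr_pdivlMr ?ltr0n //.
have [s_lt0|s_ge0] := ltP s 0; last by nra.
apply: lt_le_trans (le_trans lna_ge0 lna_le).
by rewrite pmulr_llt0 ?ltr0n // pmulr_rlt0.
Qed.

Lemma limn_esup_block_sum :
  limn_esup (fun n => log_rate (block_sum n) n) =
  (k%:R%:E * limn_esup (fun m => log_rate (a m) m))%E.
Proof.
have k_pos : 0 < k%:R :> R by rewrite ltr0n.
apply/le_anti/andP; split.
- rewrite -lee_pdivrMl //; apply: limn_esup_le_frequently; first by rewrite invr_gt0.
  exact: frequently_block_sum_term.
- exact: limn_esup_le_frequently frequently_term_block_sum.
Qed.

End BlockSums.

Definition join_fam (T : Type) d e (f : 'I_d -> T) (g : 'I_e -> T) (l : 'I_(d + e)) : T :=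
  match fintype.split l with inl i => f i | inr j => g j end.

Lemma join_fam_lshift (T : Type) d e (f : 'I_d -> T) (g : 'I_e -> T) i :
  join_fam f g (lshift e i) = f i.
Proof. by rewrite /join_fam (unsplitK (inl i)). Qed.

Lemma join_fam_rshift (T : Type) d e (f : 'I_d -> T) (g : 'I_e -> T) j :
  join_fam f g (rshift d j) = g j.
Proof. by rewrite /join_fam (unsplitK (inr j)). Qed.

Section QuotientDimension.
Variables (K : fieldType) (A : algType K).
Implicit Types (S U V W : set A).

Definition span_mod W d (b : 'I_d -> A) : set A :=
  [set x | exists (c : 'I_d -> K) (w : A), W w /\ x = \sum_(i < d) c i *: b i + w].

Definition free_mod W d (b : 'I_d -> A) : Prop :=
  forall c : 'I_d -> K, W (\sum_(i < d) c i *: b i) -> forall i, c i = 0.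

Lemma subspace_lincomb S d (c : 'I_d -> K) (b : 'I_d -> A) :
  is_subspace S -> (forall i, S (b i)) -> S (\sum_(i < d) c i *: b i).
Proof. by move=> [S0 [SD SZ]] Sb; elim/big_ind: _ => //; auto. Qed.

Lemma subspaceB S x y : is_subspace S -> S x -> S y -> S (x - y).
Proof. by move=> [_ [SD SZ]] Sx Sy; apply: SD => //; rewrite -scaleN1r; exact: SZ. Qed.

Lemma sum_scale_mulmx d e (x : 'rV[K]_e) (M : 'M[K]_(e, d)) (b : 'I_d -> A) :
  \sum_(l < e) x 0 l *: \sum_(j < d) M l j *: b j = \sum_(j < d) (x *m M) 0 j *: b j.
Proof.
under eq_bigr => l _ do rewrite scaler_sumr.
rewrite exchange_big; apply: eq_bigr => j _.
by rewrite mxE scaler_suml; apply: eq_bigr => l _; rewrite scalerA.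
Qed.

Lemma free_mod_leq_span W d e (b : 'I_d -> A) (c : 'I_e -> A) :
  is_subspace W -> (forall l, span_mod W b (c l)) -> free_mod W c -> (e <= d)%N.
Proof.
move=> W_sub c_span c_free.
have /choice[f fP] : forall l, exists p : ('I_d -> K) * A,
    W p.2 /\ c l = \sum_(j < d) p.1 j *: b j + p.2.
  by move=> l; have [x [w [Ww ->]]] := c_span l; exists (x, w).
rewrite leqNgt; apply/negP => d_lt_e.
pose M : 'M[K]_(e, d) := \matrix_(l, j) (f l).1 j.
have /rowV0Pn[x /sub_kermxP xM x_neq0] : kermx M != 0.
  by rewrite kermx_eq0 /row_free neq_ltn (leq_ltn_trans (rank_leq_col M)).
have W_x : W (\sum_(l < e) x 0 l *: c l).
  have -> : \sum_(l < e) x 0 l *: c l = \sum_(l < e) x 0 l *: (f l).2.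
    have fM l : (f l).1 = M l by apply: funext => j; rewrite mxE.
    under eq_bigr => l _ do rewrite (proj2 (fP l)) fM scalerDr.
    by rewrite big_split /= sum_scale_mulmx xM big1 ?add0r // => j _; rewrite mxE scale0r.
  by apply: subspace_lincomb => // l; exact: (proj1 (fP l)).
by move/negP: x_neq0; apply; apply/eqP/rowP => l; rewrite (c_free _ W_x l) mxE.
Qed.

Lemma quot_basis_leq V W d e (b : 'I_d -> A) (c : 'I_e -> A) :
  is_subspace W -> quot_basis V W b -> quot_basis V W c -> (e <= d)%N.
Proof.
move=> W_sub [_ [b_span _]] [c_in [_ c_free]].
by apply: free_mod_leq_span W_sub _ c_free => l; exact: b_span (c_in l).
Qed.

Lemma qdim_quot_basis V W d (b : 'I_d -> A) :
  is_subspace W -> quot_basis V W b -> qdim V W = d.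
Proof.
move=> W_sub b_basis; rewrite /qdim.
pose P := [set n | exists c : 'I_n -> A, quot_basis V W c].
have [c c_basis] : P (xget 0%N P) by apply: xgetPex; exists d, b.
by apply/eqP; rewrite eqn_leq (quot_basis_leq W_sub b_basis c_basis)
  (quot_basis_leq W_sub c_basis b_basis).
Qed.

Lemma sum_join_fam d e (z : 'I_(d + e) -> K) (b : 'I_d -> A) (c : 'I_e -> A) :
  \sum_(l < d + e) z l *: join_fam b c l =
  \sum_(i < d) z (lshift e i) *: b i + \sum_(j < e) z (rshift d j) *: c j.
Proof.
by rewrite big_split_ord; congr (_ + _); apply: eq_bigr => i _;
  rewrite ?join_fam_lshift ?join_fam_rshift.
Qed.

Lemma quot_basis_join V U W d e (b : 'I_d -> A) (c : 'I_e -> A) :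
  is_subspace U -> W `<=` U -> U `<=` V ->
  quot_basis U W b -> quot_basis V U c -> quot_basis V W (join_fam b c).
Proof.
move=> U_sub WU UV [b_in [b_span b_free]] [c_in [c_span c_free]]; split; [|split].
- by move=> l; rewrite /join_fam; case: (fintype.split l) => [i|j]; [apply: UV|].
- move=> x /c_span[y [u [/b_span[z [w [Ww ->]]] ->]]].
  exists (join_fam z y), w; split => //.
  rewrite sum_join_fam addrCA addrA; congr (_ + _ + _); apply: eq_bigr => i _;
    by rewrite ?join_fam_lshift ?join_fam_rshift.
- move=> z; rewrite sum_join_fam => W_z.
  have U_bz : U (\sum_(i < d) z (lshift e i) *: b i) by apply: subspace_lincomb.
  have /c_free zr : U (\sum_(j < e) z (rshift d j) *: c j).
    by have := subspaceB U_sub (WU _ W_z) U_bz; rewrite addrC addKr.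
  have zl : forall i, z (lshift e i) = 0.
    apply: b_free; move: W_z; rewrite [X in _ + X]big1 ?addr0 // => j _.
    by rewrite zr scale0r.
  by move=> l; rewrite -(splitK l); case: (fintype.split l).
Qed.

End QuotientDimension.

Section FiltrationQuotients.
Variables (K : fieldType) (A : algType K) (V : nat -> set A).
Hypothesis V_filtration : filtration V.

Lemma filtration_subset i j : (i <= j)%N -> V i `<=` V j.
Proof.
have [_ [_ [V_step _]]] := V_filtration.
move=> /subnK <-; elim: (j - i)%N => [|m IH] //=.
by rewrite addSn; apply: subset_trans IH (V_step _).
Qed.

Lemma quot_basis_filtration i m : exists d (b : 'I_d -> A),
  quot_basis (V (i + m)) (V i) b /\ d = (\sum_(i <= l < i + m) qdim (V l.+1) (V l))%N.
Proof.
have [_ [V_sub [_ [_ [_ V_fin]]]]] := V_filtration.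
elim: m => [|m [d [b [b_basis d_sum]]]].
  exists 0%N, (fun _ => 0); rewrite addn0 big_geq //; split => //.
  split; first by case.
  split; last by move=> c _; case.
  by move=> x Vx; exists (fun _ => 0), x; rewrite big_ord0 add0r.
have [e [c c_basis]] := V_fin (i + m).+1 isT.
exists (d + e)%N, (join_fam b c); rewrite addnS; split.
  by apply: quot_basis_join c_basis => //; apply: filtration_subset => /=; rewrite ?leq_addr.
by rewrite big_nat_recr /= ?leq_addr // -d_sum (qdim_quot_basis (V_sub _) c_basis).
Qed.

Lemma qdim_filtration i j : (i <= j)%N ->
  qdim (V j) (V i) = (\sum_(i <= l < j) qdim (V l.+1) (V l))%N.
Proof.
move=> /subnKC <-; have [d [b [b_basis <-]]] := quot_basis_filtration i (j - i).
exact: qdim_quot_basis (proj1 (proj2 V_filtration) _) b_basis.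
Qed.

End FiltrationQuotients.

Theorem proposition3p2 (K : fieldType) (A : algType K) (R : realType)
    (V : nat -> set A) (k : nat) :
  fin_gen A -> filtration V -> (1 <= k)%N ->
  halg R (fun n => V (n * k)%N) = ((k%:R : R)%:E * halg R V)%E.
Proof.
move=> _ V_filtration k_gt0; rewrite /halg; case: asboolP => _; first by rewrite mule0.
have -> : halg_term R (fun n => V (n * k)%N) =
    (fun n => log_rate R (\sum_(n.-1 * k <= l < n * k) qdim (V l.+1) (V l)) n).
  apply: funext => n; rewrite /halg_term qdim_filtration //.
  by rewrite leq_mul2r leq_pred orbT.
exact: (limn_esup_block_sum R (fun m => qdim (V m) (V m.-1)) k_gt0).
Qed.
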